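(* Let $m\ge1$, $n\ge1$, $N>2n$. Let $\mathbf M_N$ be a symmetric positive definite $mN\times mN$ block-circulant matrix which is banded of bandwidth $n$, and let $\mathbf e=\{\mathbf e(t)\}_{t=1}^N$ be a stationary process on $\mathbb Z_N$ with covariance matrix $\mathbb E\,\mathbf e\mathbf e^\top=\mathbf M_N$. Then there is a unique process $\mathbf y$ solving $\mathbf M_N\mathbf y=\mathbf e$; it is a full rank stationary reciprocal process of order $n$ on $\mathbb Z_N$, it satisfies $\mathbb E\,\mathbf y\mathbf e^\top=I_{mN}$, and $\mathbf e$ is its normalized conjugate process, i.e. $\mathbf e(t)=\Delta^{-1}\mathbf d(t)$ where $\mathbf d(t)=\mathbf y(t)-\hat{\mathbb E}[\mathbf y(t)\mid\mathbf y(s),s\ne t]$ and $\Delta=\mathbb E\,\mathbf d(t)\mathbf d(t)^\top$.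
   Context: Processes are stacked as vectors in $\mathbb R^{mN}$, $\mathbf y=(\mathbf y(1)^\top,\dots,\mathbf y(N)^\top)^\top$. A matrix with $N\times N$ blocks of size $m\times m$ is block-circulant if its $(i,j)$ block depends only on $(i-j)\bmod N$, and banded of bandwidth $n$ if moreover its $(i,j)$ block is zero whenever $\min\{(i-j)\bmod N,(j-i)\bmod N\}>n$. A process on $\mathbb Z_N$ is a zero-mean second-order $\mathbb R^m$-valued process indexed by $t=1,\dots,N$ (indices mod $N$) whose covariance is symmetric block-circulant (it is then called stationary); full rank means positive definite covariance. $\hat{\mathbb E}[\cdot\mid\cdot]$ is orthogonal projection onto the closed linear span of the scalar components of the conditioning variables. Subspaces $\mathcal A,\mathcal B$ are conditionally orthogonal given $\mathcal C$ if $a-\hat{\mathbb E}[a\mid\mathcal C]$ and $b-\hat{\mathbb E}[b\mid\mathcal C]$ are uncorrelated for all $a\in\mathcal A,b\in\mathcal B$. The process is reciprocal of order $n$ if for every cyclic interval $(t_1,t_2)$ the variables $\{\mathbf y(t):t\in(t_1,t_2)\}$ are conditionally orthogonal to $\{\mathbf y(s):s\notin(t_1,t_2)\}$ given $\mathbf y(t_1-n+1),\dots,\mathbf y(t_1),\mathbf y(t_2),\dots,\mathbf y(t_2+n-1)$. *)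

From mathcomp Require Import all_boot all_order all_algebra.
From mathcomp Require Import all_classical all_reals all_analysis.
Set Implicit Arguments. Unset Strict Implicit. Unset Printing Implicit Defensive.
Import Order.TTheory GRing.Theory Num.Theory.
Local Open Scope ring_scope.

Section second_order_processes.
Context {d : measure_display} {T : measurableType d} {R : realType}
  (P : probability T R).

Definition cov (X Y : T -> R) : R := fine (covariance P X Y).

Definition second_order (X : T -> R) : Prop :=
  X \in Lfun P 2%:E /\ ('E_P[X] = 0)%E.

(* b belongs to the linear span of the variables {C i : i in A}
   (a finite family, so the span is already closed) *)
Definition in_span {I : finType} (C : I -> T -> R) (A : {set I}) (b : T -> R) :=
  exists c : I -> R, b = (fun w => \sum_(i in A) c i * C i w).

(* b is (a version of) the orthogonal projection  \hat E[a | C i, i in A] *)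
Definition is_proj {I : finType} (C : I -> T -> R) (A : {set I}) (a b : T -> R) :=
  in_span C A b /\ forall i, i \in A -> cov (a \- b) (C i) = 0.

Definition cond_orth {I : finType} (C : I -> T -> R) (A B D : {set I}) :=
  forall a b pa pb, in_span C A a -> in_span C B b ->
    is_proj C D a pa -> is_proj C D b pb -> cov (a \- pa) (b \- pb) = 0.

(* Processes on Z_N with values in R^m are stacked vectors of m*N scalar
   random variables; the a-th component of y(t) is y (mxvec_index t a),
   i.e. has index t*m + a. *)
Definition is_process (N m : nat) (y : 'I_(N * m) -> T -> R) :=
  forall i, second_order (y i).

Definition covmx (K : nat) (y z : 'I_K -> T -> R) : 'M[R]_K :=
  \matrix_(i, j) cov (y i) (z j).

End second_order_processes.

Section block_matrices.
Context {R : realType}.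

Definition block_circulant (N m : nat) (M : 'M[R]_(N * m)) :=
  forall (t s t' s' : 'I_N) (a b : 'I_m),
    ((t + N - s) %% N = (t' + N - s') %% N)%N ->
    M (mxvec_index t a) (mxvec_index s b) = M (mxvec_index t' a) (mxvec_index s' b).

Definition banded (N m n : nat) (M : 'M[R]_(N * m)) :=
  block_circulant M /\
  forall (t s : 'I_N) (a b : 'I_m),
    (n < minn ((t + N - s) %% N) ((s + N - t) %% N))%N ->
    M (mxvec_index t a) (mxvec_index s b) = 0.

Definition sym_posdef (K : nat) (A : 'M[R]_K) :=
  A^T = A /\ forall v : 'rV[R]_K, v != 0 -> 0 < (v *m A *m v^T) 0 0.

End block_matrices.

Section processes_on_ZN.
Context {d : measure_display} {T : measurableType d} {R : realType}
  (P : probability T R) (N m : nat).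

Definition stationary (y : 'I_(N * m) -> T -> R) :=
  is_process P y /\ (covmx P y y)^T = covmx P y y /\ block_circulant (covmx P y y).

Definition full_rank (y : 'I_(N * m) -> T -> R) := sym_posdef (covmx P y y).

Definition comps (S : {set 'I_N}) : {set 'I_(N * m)} :=
  [set mxvec_index t a | t in S, a in [set: 'I_m]].

Definition cyc_interior (t1 t2 : 'I_N) : {set 'I_N} :=
  [set t : 'I_N | (0 < (t + N - t1) %% N < (t2 + N - t1) %% N)%N].

Definition cyc_boundary (n : nat) (t1 t2 : 'I_N) : {set 'I_N} :=
  [set t : 'I_N | ((t1 + N - t) %% N < n)%N || ((t + N - t2) %% N < n)%N].

Definition reciprocal (n : nat) (y : 'I_(N * m) -> T -> R) :=
  forall t1 t2 : 'I_N,
    cond_orth P y (comps (cyc_interior t1 t2)) (comps (~: cyc_interior t1 t2))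
      (comps (cyc_boundary n t1 t2)).

Definition normalized_conjugate (y e : 'I_(N * m) -> T -> R) :=
  forall (t : 'I_N) (py : 'I_m -> T -> R),
    (forall a, is_proj P y (comps (~: [set t])) (y (mxvec_index t a)) (py a)) ->
    let dt := fun a => y (mxvec_index t a) \- py a in
    let Delta := \matrix_(a, b) cov P (dt a) (dt b) in
    Delta \in unitmx /\
    forall a, e (mxvec_index t a) = (fun w => \sum_b invmx Delta a b * dt b w).

Definition solves (M : 'M[R]_(N * m)) (y e : 'I_(N * m) -> T -> R) :=
  forall i, e i = (fun w => \sum_j M i j * y j w).

End processes_on_ZN.

(* Put y = M^-1 e.  Every variable involved is a combination u.e of the e's, and
   cov(u.e, v.e) = u M v^T; in particular cov(u.e, y) = u, so cov(y, e) = I and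
   cov(y) = M^-1, which is block-circulant like M.  A combination of the y(i),
   i in A, is g M^-1.e with g supported on A, and its projection on the span of the
   y(i), i in D, is pinned down by its coordinates on D.  So a residual given D is
   x.e with x vanishing on D and x M supported on A and D.  When M has no entries
   between the interior and the exterior of a cyclic interval off its n-boundary,
   positive definiteness forces such x to stay on the side of A, which is
   reciprocity of order n.  For D = everything but block t the residual is
   d(t) = M_tt^-1 e(t), whose covariance is M_tt^-1, so Delta^-1 d(t) = e(t). *)

From mathcomp Require Import all_boot all_order all_algebra.
From mathcomp Require Import all_classical all_reals all_analysis.
From mathcomp Require Import zify.

Set Implicit Arguments. Unset Strict Implicit. Unset Printing Implicit Defensive.
Import Order.TTheory GRing.Theory Num.Theory.
Local Open Scope ring_scope.

Section covariance.
Context {d : measure_display} {T : measurableType d} {R : realType}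
  (P : probability T R).

Local Notation L2 := (Lfun P 2%:E).

Let P_fin_num : P setT \is a fin_num. Proof. exact: fin_num_measure. Qed.

Lemma covariance_Lfun2_fin_num (X Y : T -> R) : X \in L2 -> Y \in L2 ->
  covariance P X Y \is a fin_num.
Proof.
move=> hX hY; apply: covariance_fin_num; try exact: Lfun_subset12.
exact: Lfun2_mul_Lfun1.
Qed.

Lemma covC (X Y : T -> R) : cov P X Y = cov P Y X.
Proof. by rewrite /cov covarianceC. Qed.

Lemma covDl (X Y Z : T -> R) : X \in L2 -> Y \in L2 -> Z \in L2 ->
  cov P (X \+ Y) Z = cov P X Z + cov P Y Z.
Proof.
move=> hX hY hZ.
by rewrite /cov covarianceDl // fineD // covariance_Lfun2_fin_num.
Qed.

Lemma covZl (a : R) (X Y : T -> R) : X \in L2 -> Y \in L2 ->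
  cov P (fun w => a * X w) Y = a * cov P X Y.
Proof.
move=> hX hY; have -> : (fun w => a * X w) = a \o* X.
  by apply/funeqP => w; rewrite /GRing.mulr_fun mulrC.
rewrite /cov covarianceZl; try exact: Lfun_subset12; last exact: Lfun2_mul_Lfun1.
by rewrite fineM // covariance_Lfun2_fin_num.
Qed.

Lemma fun_sum_cons (I : Type) (i : I) (r : seq I) (c : I -> R) (X : I -> T -> R) :
  (fun w => \sum_(j <- i :: r) c j * X j w) =
  (c i \o* X i) \+ (fun w => \sum_(j <- r) c j * X j w).
Proof. by apply/funeqP => w; rewrite big_cons /= /GRing.mulr_fun mulrC. Qed.

Lemma fun_sum_nil (I : Type) (c : I -> R) (X : I -> T -> R) :
  (fun w => \sum_(i <- [::]) c i * X i w) = cst 0.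
Proof. by apply/funeqP => w; rewrite big_nil. Qed.

Lemma Lfun2_sum (I : Type) (r : seq I) (c : I -> R) (X : I -> T -> R) :
  (forall i, X i \in L2) -> (fun w => \sum_(i <- r) c i * X i w) \in L2.
Proof.
move=> hX; elim: r => [|i r IH]; first by rewrite fun_sum_nil Lfun_cst.
rewrite fun_sum_cons; apply: rpredD => //; first by rewrite lee_fin ler1n.
by move=> ?; apply: Lfun_scale; rewrite // ler1n.
Qed.

Lemma cov_suml (I : Type) (r : seq I) (c : I -> R) (X : I -> T -> R) (Y : T -> R) :
  (forall i, X i \in L2) -> Y \in L2 ->
  cov P (fun w => \sum_(i <- r) c i * X i w) Y = \sum_(i <- r) c i * cov P (X i) Y.
Proof.
move=> hX hY; elim: r => [|i r IH].
  by rewrite fun_sum_nil big_nil /cov covariance_cst_l.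
rewrite fun_sum_cons covDl ?Lfun2_sum //; last by rewrite Lfun_scale // ler1n.
have -> : c i \o* X i = (fun w => c i * X i w).
  by apply/funeqP => w; rewrite /GRing.mulr_fun mulrC.
by rewrite covZl // IH big_cons.
Qed.

Lemma cov_sumr (I : Type) (r : seq I) (c : I -> R) (X : I -> T -> R) (Y : T -> R) :
  (forall i, X i \in L2) -> Y \in L2 ->
  cov P Y (fun w => \sum_(i <- r) c i * X i w) = \sum_(i <- r) c i * cov P Y (X i).
Proof.
move=> hX hY; rewrite covC cov_suml //.
by apply: eq_bigr => i _; rewrite covC.
Qed.

Lemma second_order_sum (I : Type) (r : seq I) (c : I -> R) (X : I -> T -> R) :
  (forall i, second_order P (X i)) ->
  second_order P (fun w => \sum_(i <- r) c i * X i w).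
Proof.
move=> hX; have hX2 j : X j \in L2 by case: (hX j).
split; first exact: Lfun2_sum.
elim: r => [|i r IH]; first by rewrite fun_sum_nil expectation_cst.
have hXi : c i \o* X i \in Lfun P 1.
  by apply: (Lfun_subset12 P_fin_num); rewrite Lfun_scale // ler1n.
have hr : (fun w => \sum_(j <- r) c j * X j w) \in Lfun P 1.
  exact/(Lfun_subset12 P_fin_num)/Lfun2_sum.
rewrite fun_sum_cons expectationD // IH expectationZl ?(proj2 (hX i)) ?mule0 ?adde0 //.
exact: (Lfun_subset12 P_fin_num).
Qed.

End covariance.

Section linear_combinations.
Context {d : measure_display} {T : measurableType d} {R : realType}
  (P : probability T R) (K : nat) (e : 'I_K -> T -> R) (M : 'M[R]_K).
Hypothesis e_second_order : forall i, second_order P (e i).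
Hypothesis cov_e : forall i j, cov P (e i) (e j) = M i j.

Definition lincomb (v : 'rV[R]_K) : T -> R := fun w => \sum_i v 0 i * e i w.

Let e_Lfun2 i : e i \in Lfun P 2%:E. Proof. by case: (e_second_order i). Qed.

Lemma lincomb_second_order v : second_order P (lincomb v).
Proof. exact: second_order_sum. Qed.

Lemma cov_lincomb u v : cov P (lincomb u) (lincomb v) = (u *m M *m v^T) 0 0.
Proof.
have cov_e_lincomb i : cov P (e i) (lincomb v) = \sum_j v 0 j * M i j.
  by rewrite cov_sumr //; apply: eq_bigr => j _; rewrite cov_e.
rewrite {1}/lincomb cov_suml //; last exact: Lfun2_sum.
under eq_bigr => i _ do rewrite cov_e_lincomb.
rewrite mxE; under [RHS]eq_bigr => j _ do rewrite !mxE big_distrl /=.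
rewrite exchange_big /=; apply: eq_bigr => i _; rewrite big_distrr /=.
by apply: eq_bigr => j _; rewrite -mulrA [v 0 j * M i j]mulrC.
Qed.

Lemma lincomb_mul (p : nat) (c : 'rV[R]_p) (A : 'M[R]_(p, K)) :
  (fun w => \sum_i c 0 i * lincomb (row i A) w) = lincomb (c *m A).
Proof.
apply/funeqP => w; rewrite /lincomb.
under eq_bigr => i _ do rewrite big_distrr /=.
rewrite exchange_big /=; apply: eq_bigr => j _.
by rewrite !mxE big_distrl /=; apply: eq_bigr => i _; rewrite mxE mulrA.
Qed.

Lemma lincomb_delta i : lincomb (delta_mx 0 i) = e i.
Proof.
apply/funeqP => w; rewrite /lincomb (bigD1 i) //= mxE !eqxx mul1r big1 ?addr0 //.
by move=> j /negbTE ji; rewrite mxE ji andbF mul0r.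
Qed.

Lemma lincombB u v : lincomb u \- lincomb v = lincomb (u - v).
Proof.
apply/funeqP => w; rewrite /lincomb /= -sumrB; apply: eq_bigr => i _.
by rewrite !mxE mulrBl.
Qed.

End linear_combinations.

Section positive_definite.
Context {R : realType} {K : nat}.

Lemma sym_posdef_supp_eq0 (A : 'M[R]_K) (S : {set 'I_K}) (v : 'rV[R]_K) :
  sym_posdef A -> (forall i, i \notin S -> v 0 i = 0) ->
  (forall j, j \in S -> (v *m A) 0 j = 0) -> v = 0.
Proof.
move=> [_ pd] v_supp vA_supp; apply/eqP; apply: contraT => /pd.
rewrite mxE big1 ?ltxx // => j _; rewrite [v^T _ _]mxE.
by case: (boolP (j \in S)) => jS; [rewrite vA_supp // mul0r | rewrite v_supp // mulr0].
Qed.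

Lemma sym_posdef_unitmx (A : 'M[R]_K) : sym_posdef A -> A \in unitmx.
Proof.
move=> A_pd; rewrite -row_free_unit; apply: inj_row_free => v vA0.
by apply: (sym_posdef_supp_eq0 (S := [set: 'I_K]) A_pd) => [i|j _]; rewrite ?inE ?vA0 ?mxE.
Qed.

Lemma sym_posdef_invmx (A : 'M[R]_K) : sym_posdef A -> sym_posdef (invmx A).
Proof.
move=> A_pd; have A_unit := sym_posdef_unitmx A_pd; case: A_pd => A_sym pd.
split; first by rewrite trmx_inv A_sym.
move=> v v_neq0; set u := v *m invmx A.
have vE : v = u *m A by rewrite /u mulmxKV.
have u_neq0 : u != 0 by apply: contra v_neq0 => /eqP u0; rewrite vE u0 mul0mx.
by rewrite -/u {1}vE trmx_mul A_sym mulmxA; apply: pd.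
Qed.

Lemma sym_posdef_supp_sub (A : 'M[R]_K) (X D : {set 'I_K}) (x : 'rV[R]_K) :
  sym_posdef A ->
  (forall i j, i \in X -> i \notin D -> j \notin X -> j \notin D -> A i j = 0) ->
  (forall i, i \in D -> x 0 i = 0) ->
  (forall j, j \notin X -> j \notin D -> (x *m A) 0 j = 0) ->
  forall i, i \notin X -> x 0 i = 0.
Proof.
move=> A_pd A_sep xD xA_out.
pose x_out := \row_i (if i \in X then 0 else x 0 i).
have x_out0 : x_out = 0.
  apply: (sym_posdef_supp_eq0 (S := ~: X :&: ~: D) A_pd).
    move=> i; rewrite !inE negb_and !negbK => /orP [iX | iD]; rewrite mxE ?iX //.
    by case: ifP => // _; exact: xD.
  move=> j; rewrite !inE => /andP [jX jD].
  rewrite -(xA_out j jX jD) !mxE; apply: eq_bigr => i _; rewrite mxE.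
  case: ifP => iX //; case: (boolP (i \in D)) => iD; first by rewrite xD // !mul0r.
  by rewrite (A_sep i j) // !mulr0.
by move=> i iX; move/matrixP/(_ 0 i): x_out0; rewrite !mxE (negbTE iX).
Qed.

End positive_definite.

Section dual_process.
Context {d : measure_display} {T : measurableType d} {R : realType}
  (P : probability T R) (K : nat) (e : 'I_K -> T -> R) (M : 'M[R]_K).
Hypothesis e_second_order : forall i, second_order P (e i).
Hypothesis cov_e : forall i j, cov P (e i) (e j) = M i j.
Hypothesis M_pd : sym_posdef M.

Let M_unit : M \in unitmx. Proof. exact: sym_posdef_unitmx. Qed.
Let invM_sym : (invmx M)^T = invmx M. Proof. by case: (sym_posdef_invmx M_pd). Qed.

Local Notation lincomb := (lincomb e).

Definition dual (i : 'I_K) : T -> R := lincomb (row i (invmx M)).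

Lemma dual_second_order i : second_order P (dual i).
Proof. exact: lincomb_second_order. Qed.

Lemma cov_lincomb_dual (w : 'rV[R]_K) i : cov P (lincomb w) (dual i) = w 0 i.
Proof.
rewrite (cov_lincomb e_second_order cov_e) tr_row invM_sym colE !mulmxA -(mulmxA w).
by rewrite mulmxV // mulmx1 -colE mxE.
Qed.

Lemma covmx_dual : covmx P dual dual = invmx M.
Proof. by apply/matrixP => i j; rewrite mxE cov_lincomb_dual mxE. Qed.

Lemma covmx_dual_e : covmx P dual e = 1%:M.
Proof.
apply/matrixP => i j.
by rewrite mxE covC -(lincomb_delta e) cov_lincomb_dual !mxE eqxx.
Qed.

Lemma solves_dual i : e i = (fun w => \sum_j M i j * dual j w).
Proof.
rewrite -(lincomb_delta e) -[delta_mx 0 i](mulmxK M_unit) -rowE -(lincomb_mul e).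
by apply/funeqP => w; apply: eq_bigr => j _; rewrite mxE.
Qed.

Lemma solves_uniq (y : 'I_K -> T -> R) :
  (forall i, e i = (fun w => \sum_j M i j * y j w)) -> y = dual.
Proof.
move=> y_solves; apply/funext => i; apply/funeqP => w.
rewrite /dual /lincomb; under [RHS]eq_bigr => j _ do rewrite y_solves big_distrr /=.
rewrite exchange_big /=; symmetry.
transitivity (\sum_k (row i (invmx M) *m M) 0 k * y k w).
  apply: eq_bigr => k _; rewrite mxE big_distrl /=.
  by apply: eq_bigr => j _; rewrite mulrA.
rewrite -row_mul mulVmx // (bigD1 i) //= big1 ?addr0; first by rewrite !mxE eqxx mul1r.
by move=> k /negbTE ki; rewrite !mxE eq_sym ki mul0r.
Qed.

Lemma in_span_dualP (A : {set 'I_K}) (f : T -> R) :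
  in_span dual A f <->
  exists2 g : 'rV[R]_K, (forall i, i \notin A -> g 0 i = 0) & f = lincomb (g *m invmx M).
Proof.
split => [[c ->] | [g g_supp ->]].
  exists (\row_i (if i \in A then c i else 0)) => [i iA|]; first by rewrite mxE (negbTE iA).
  rewrite -lincomb_mul; apply/funeqP => w; rewrite big_mkcond /=.
  by apply: eq_bigr => i _; rewrite mxE; case: ifP; rewrite ?mul0r.
exists (fun i => g 0 i); rewrite -lincomb_mul; apply/funeqP => w.
rewrite [RHS]big_mkcond /=; apply: eq_bigr => i _.
by case: ifP => // /negbT /g_supp ->; rewrite mul0r.
Qed.

Lemma is_proj_dual (A : {set 'I_K}) (w : 'rV[R]_K) (p : T -> R) :
  is_proj P dual A (lincomb w) p ->
  exists g : 'rV[R]_K, [/\ forall i, i \notin A -> g 0 i = 0,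
    p = lincomb (g *m invmx M) & forall i, i \in A -> (g *m invmx M) 0 i = w 0 i].
Proof.
case=> /in_span_dualP [g g_supp ->] orth; exists g; split => // i iA.
move: (orth i iA); rewrite lincombB cov_lincomb_dual !mxE => /eqP.
by rewrite subr_eq0 => /eqP.
Qed.

Lemma is_proj_dual_uniq (A : {set 'I_K}) (w : 'rV[R]_K) (p q : T -> R) :
  is_proj P dual A (lincomb w) p -> is_proj P dual A (lincomb w) q -> p = q.
Proof.
move=> /is_proj_dual [g [g_supp -> gw]] /is_proj_dual [h [h_supp -> hw]].
suff /eqP : g - h = 0 by rewrite subr_eq0 => /eqP ->.
apply: (sym_posdef_supp_eq0 (S := A) (sym_posdef_invmx M_pd)).
  by move=> i iA; rewrite !mxE g_supp // h_supp // subrr.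
by move=> j jA; rewrite mulmxBl [LHS]mxE [X in _ + X]mxE gw // hw // subrr.
Qed.

Lemma cond_orth_dual (I D : {set 'I_K}) :
  (forall i j, i \in I -> i \notin D -> j \notin I -> j \notin D -> M i j = 0) ->
  cond_orth P dual I (~: I) D.
Proof.
move=> M_sep a b pa pb /in_span_dualP [al al_supp ->] /in_span_dualP [be be_supp ->].
case/is_proj_dual => g [g_supp -> g_al]; case/is_proj_dual => h [h_supp -> h_be].
rewrite !lincombB (cov_lincomb e_second_order cov_e) -!mulmxBl.
set x := (al - g) *m invmx M; set z := (be - h) *m invmx M.
have xD i : i \in D -> x 0 i = 0.
  by move=> iD; rewrite /x mulmxBl [LHS]mxE [X in _ + X]mxE g_al // subrr.
have zD i : i \in D -> z 0 i = 0.
  by move=> iD; rewrite /z mulmxBl [LHS]mxE [X in _ + X]mxE h_be // subrr.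
have x_in i : i \notin I -> x 0 i = 0.
  apply: (sym_posdef_supp_sub M_pd M_sep) => // j jI jD.
  by rewrite mulmxKV // !mxE al_supp // g_supp // subrr.
have z_in i : i \in I -> z 0 i = 0.
  move=> iI; apply: (sym_posdef_supp_sub (X := ~: I) M_pd _ zD); last by rewrite inE negbK.
    move=> i' j; rewrite !inE negbK => i'I i'D jI jD.
    by case: M_pd => [M_sym _]; rewrite -M_sym mxE M_sep.
  move=> j; rewrite inE negbK => jI jD.
  by rewrite mulmxKV // !mxE h_supp // be_supp ?subrr // inE negbK.
rewrite mxE big1 // => j _; rewrite [(x *m M) _ _]mxE big_distrl big1 //= => i _.
rewrite [z^T _ _]mxE.
case: (boolP (i \in I)) => iI; last by rewrite x_in // !mul0r.
case: (boolP (i \in D)) => iD; first by rewrite xD // !mul0r.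
case: (boolP (j \in I)) => jI; first by rewrite z_in // mulr0.
case: (boolP (j \in D)) => jD; first by rewrite zD // mulr0.
by rewrite M_sep // mulr0 mul0r.
Qed.

End dual_process.

Lemma modn_cyc_diff (N x y : nat) : (x < N)%N -> (y < N)%N ->
  ((x + N - y) %% N = if (y <= x)%N then x - y else x + N - y)%N.
Proof.
move=> xN yN; case: (leqP y x) => yx; last by rewrite modn_small //; lia.
by rewrite -addnBAC // modnDr modn_small // (leq_ltn_trans (leq_subr _ _) xN).
Qed.

Lemma cyc_diff_cases (N x y : nat) : (x < N)%N -> (y < N)%N ->
  ((x + N - y) %% N < N /\
   ((x + N - y) %% N + y = x \/ (x + N - y) %% N + y = x + N))%N.
Proof. by move=> xN yN; rewrite modn_cyc_diff //; case: (leqP y x); lia. Qed.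

Lemma cyc_interior_exterior_far (N n t1 t2 t s : nat) : (1 <= n)%N ->
  (t1 < N)%N -> (t2 < N)%N -> (t < N)%N -> (s < N)%N ->
  (0 < (t + N - t1) %% N < (t2 + N - t1) %% N)%N ->
  ~~ (((t1 + N - t) %% N < n) || ((t + N - t2) %% N < n))%N ->
  ~~ (0 < (s + N - t1) %% N < (t2 + N - t1) %% N)%N ->
  ~~ (((t1 + N - s) %% N < n) || ((s + N - t2) %% N < n))%N ->
  (n < minn ((t + N - s) %% N) ((s + N - t) %% N))%N.
Proof.
move=> n_gt0 t1N t2N tN sN.
have := cyc_diff_cases tN t1N; have := cyc_diff_cases t2N t1N.
have := cyc_diff_cases t1N tN; have := cyc_diff_cases tN t2N.
have := cyc_diff_cases sN t1N; have := cyc_diff_cases t1N sN.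
have := cyc_diff_cases sN t2N; have := cyc_diff_cases tN sN.
have := cyc_diff_cases sN tN.
move: ((t + N - t1) %% N)%N ((t2 + N - t1) %% N)%N ((t1 + N - t) %% N)%N
  ((t + N - t2) %% N)%N ((s + N - t1) %% N)%N ((t1 + N - s) %% N)%N
  ((s + N - t2) %% N)%N ((t + N - s) %% N)%N ((s + N - t) %% N)%N.
by move=> *; lia.
Qed.

Lemma cyc_diff_shift (N t s k : nat) : (0 < N)%N -> (t < N)%N -> (s < N)%N ->
  (((t + k) %% N + N - (s + k) %% N) %% N = (t + N - s) %% N)%N.
Proof.
move=> N_gt0 tN sN; apply/eqP; rewrite -(eqn_modDr (s + k)).
rewrite -modnDmr subnK; last by apply: (leq_trans (ltnW (ltn_pmod _ N_gt0))); lia.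
rewrite modnDr modn_mod.
have -> : (t + N - s + (s + k) = t + k + N)%N by lia.
by rewrite modnDr.
Qed.

Lemma cyc_diff_eq_shift (N t s t' s' : nat) :
  (t < N)%N -> (s < N)%N -> (t' < N)%N -> (s' < N)%N ->
  ((t + N - s) %% N = (t' + N - s') %% N)%N -> ((s + (t' + N - t)) %% N = s')%N.
Proof.
move=> tN sN t'N s'N; rewrite !modn_cyc_diff // => diff_eq.
have : (s + (t' + N - t) = s' \/ s + (t' + N - t) = s' + N \/
         s + (t' + N - t) = s' + N + N)%N.
  by move: diff_eq; case: (leqP s t); case: (leqP s' t'); lia.
by case=> [|[]] ->; rewrite ?modnDr modn_small.
Qed.

Section stacked_indices.
Variables N m : nat.

Definition mxvec_unindex (k : 'I_(N * m)) : 'I_N * 'I_m :=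
  enum_val (cast_ord (esym (mxvec_cast N m)) k).

Lemma mxvec_indexK t a : mxvec_unindex (mxvec_index t a) = (t, a).
Proof. by rewrite /mxvec_unindex /mxvec_index cast_ordK enum_rankK. Qed.

Lemma mxvec_index_inj t a t' a' :
  mxvec_index t a = mxvec_index t' a' :> 'I_(N * m) -> t = t' /\ a = a'.
Proof. by move=> /(congr1 mxvec_unindex); rewrite !mxvec_indexK => -[-> ->]. Qed.

Lemma mxvec_index_injr t : injective (@mxvec_index N m t).
Proof. by move=> a b /mxvec_index_inj []. Qed.

Lemma mem_comps (S : {set 'I_N}) t a : (mxvec_index t a \in comps m S) = (t \in S).
Proof.
apply/imset2P/idP => [[t' a' t'S _ /mxvec_index_inj [-> _]] // | tS].
by exists t a; rewrite ?inE.
Qed.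

Lemma comps_setC (S : {set 'I_N}) : comps m (~: S) = ~: comps m S.
Proof.
by apply/setP => k; case/mxvec_indexP: k => t a; rewrite inE !mem_comps inE.
Qed.

End stacked_indices.

Lemma banded_interior_exterior {R : realType} (N m n : nat) (M : 'M[R]_(N * m))
    (t1 t2 : 'I_N) : (1 <= n)%N -> banded n M ->
  forall i j, i \in comps m (cyc_interior t1 t2) ->
  i \notin comps m (cyc_boundary n t1 t2) ->
  j \notin comps m (cyc_interior t1 t2) ->
  j \notin comps m (cyc_boundary n t1 t2) -> M i j = 0.
Proof.
move=> n_gt0 [_ M_band] i j; case/mxvec_indexP: i => t a; case/mxvec_indexP: j => s b.
rewrite !mem_comps !inE => t_in t_bd s_out s_bd; apply: M_band.
exact: (cyc_interior_exterior_far n_gt0 (ltn_ord t1) (ltn_ord t2) (ltn_ord t)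
  (ltn_ord s) t_in t_bd s_out s_bd).
Qed.

Lemma invmx_relabel {R : fieldType} {K : nat} (A : 'M[R]_K) (s : 'I_K -> 'I_K) :
  injective s -> A \in unitmx -> (forall i j, A (s i) (s j) = A i j) ->
  forall i j, invmx A (s i) (s j) = invmx A i j.
Proof.
move=> s_inj A_unit As i j; pose B := \matrix_(i, j) invmx A (s i) (s j).
have BA : B *m A = 1%:M.
  apply/matrixP => i' j'; rewrite mxE.
  transitivity (\sum_l invmx A (s i') l * A l (s j')).
    rewrite [RHS](reindex_inj s_inj) /=.
    by apply: eq_bigr => l _; rewrite mxE As.
  move/matrixP/(_ (s i') (s j')): (mulVmx A_unit).
  by rewrite mxE => ->; rewrite !mxE (inj_eq s_inj).
have B_inv : B = invmx A by rewrite -[B]mulmx1 -(mulmxV A_unit) mulmxA BA mul1mx.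
by move/matrixP/(_ i j): B_inv; rewrite mxE.
Qed.

Section block_circulant_inverse.
Context {R : realType} (N m : nat) (N_gt0 : (0 < N)%N).

Definition cyc_shift (k : nat) (t : 'I_N) : 'I_N := Ordinal (ltn_pmod (t + k) N_gt0).

Definition mxvec_shift (k : nat) (i : 'I_(N * m)) : 'I_(N * m) :=
  mxvec_index (cyc_shift k (mxvec_unindex i).1) (mxvec_unindex i).2.

Lemma mxvec_shiftE k t a : mxvec_shift k (mxvec_index t a) = mxvec_index (cyc_shift k t) a.
Proof. by rewrite /mxvec_shift mxvec_indexK. Qed.

Lemma mxvec_shift_inj k : injective (mxvec_shift k).
Proof.
move=> i j; case/mxvec_indexP: i => t a; case/mxvec_indexP: j => s b.
rewrite !mxvec_shiftE => /mxvec_index_inj [/(congr1 val) /= /eqP shift_eq ->].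
suff -> : t = s by [].
by apply/val_inj/eqP; move: shift_eq; rewrite eqn_modDr !modn_small.
Qed.

Lemma block_circulant_shift (A : 'M[R]_(N * m)) k i j :
  block_circulant A -> A (mxvec_shift k i) (mxvec_shift k j) = A i j.
Proof.
move=> A_circ; case/mxvec_indexP: i => t a; case/mxvec_indexP: j => s b.
by rewrite !mxvec_shiftE; apply: A_circ; rewrite /= cyc_diff_shift.
Qed.

Lemma block_circulant_invmx (A : 'M[R]_(N * m)) :
  A \in unitmx -> block_circulant A -> block_circulant (invmx A).
Proof.
move=> A_unit A_circ t s t' s' a b diff_eq; pose k := (t' + N - t)%N.
have t'E : cyc_shift k t = t'.
  apply/val_inj => /=; rewrite /k.
  have -> : (t + (t' + N - t) = t' + N)%N by have := ltn_ord t; lia.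
  by rewrite modnDr modn_small.
have s'E : cyc_shift k s = s'.
  apply/val_inj; rewrite /= /k.
  exact: (cyc_diff_eq_shift (ltn_ord t) (ltn_ord s) (ltn_ord t') (ltn_ord s') diff_eq).
rewrite -t'E -s'E -!mxvec_shiftE (invmx_relabel (@mxvec_shift_inj k) A_unit) //.
by move=> i j; apply: block_circulant_shift.
Qed.

End block_circulant_inverse.

Lemma row_mul_tr_row {R : pzRingType} p q r (X : 'M[R]_(p, q)) (Y : 'M[R]_q)
    (Z : 'M[R]_(r, q)) a b :
  (row a X *m Y *m (row b Z)^T) 0 0 = (X *m Y *m Z^T) a b.
Proof.
rewrite tr_row colE mulmxA -colE -!row_mul.
by rewrite [col _ _ _ _]mxE [row _ _ _ _]mxE.
Qed.

Section block_selection.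
Context {R : realType} (N m : nat) (t : 'I_N).

Definition block_sel : 'M[R]_(m, N * m) := \matrix_(a, i) (i == mxvec_index t a)%:R.

Lemma block_sel_mul_tr : block_sel *m block_sel^T = 1%:M.
Proof.
apply/matrixP => a b; rewrite mxE (bigD1 (mxvec_index t a)) //= !mxE eqxx mul1r.
rewrite big1 ?addr0; first by rewrite (inj_eq (@mxvec_index_injr N m t)).
by move=> i /negbTE ia; rewrite !mxE ia mul0r.
Qed.

Lemma mul_block_sel_tr (x : 'rV[R]_(N * m)) a :
  (x *m block_sel^T) 0 a = x 0 (mxvec_index t a).
Proof.
rewrite mxE (bigD1 (mxvec_index t a)) //= !mxE eqxx mulr1 big1 ?addr0 //.
by move=> i /negbTE ia; rewrite !mxE ia mulr0.
Qed.

Lemma row_block_sel a : row a block_sel = delta_mx 0 (mxvec_index t a).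
Proof. by apply/rowP => i; rewrite !mxE eqxx. Qed.

Lemma mul_block_sel_off (v : 'rV[R]_m) i :
  i \in comps m (~: [set t]) -> (v *m block_sel) 0 i = 0.
Proof.
case/mxvec_indexP: i => s b; rewrite mem_comps !inE => st.
rewrite mxE big1 // => a _; rewrite mxE.
case: eqP => [/mxvec_index_inj [ts _]|_]; last by rewrite mulr0.
by rewrite ts eqxx in st.
Qed.

Definition diag_block (M : 'M[R]_(N * m)) : 'M[R]_m := block_sel *m M *m block_sel^T.

Lemma diag_block_sym (M : 'M[R]_(N * m)) : M^T = M -> (diag_block M)^T = diag_block M.
Proof. by move=> M_sym; rewrite /diag_block !trmx_mul trmxK M_sym mulmxA. Qed.

Lemma diag_block_unitmx (M : 'M[R]_(N * m)) : sym_posdef M -> diag_block M \in unitmx.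
Proof.
move=> M_pd; rewrite -row_free_unit; apply: inj_row_free => w w0.
have w_sel0 : w *m block_sel = 0.
  apply: (sym_posdef_supp_eq0 (S := comps m [set t]) M_pd).
    by move=> i i_out; apply: mul_block_sel_off; rewrite comps_setC inE.
  case/mxvec_indexP => s b; rewrite mem_comps inE => /eqP ->.
  by rewrite -mul_block_sel_tr -!mulmxA (mulmxA block_sel) -/(diag_block M) w0 mxE.
by rewrite -[w]mulmx1 -block_sel_mul_tr mulmxA w_sel0 mul0mx.
Qed.

End block_selection.

Section normalized_conjugate.
Context {d : measure_display} {T : measurableType d} {R : realType}
  (P : probability T R) (N m : nat) (e : 'I_(N * m) -> T -> R) (M : 'M[R]_(N * m)).
Hypothesis e_second_order : forall i, second_order P (e i).
Hypothesis cov_e : forall i j, cov P (e i) (e j) = M i j.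
Hypothesis M_pd : sym_posdef M.

Let M_unit : M \in unitmx. Proof. exact: sym_posdef_unitmx. Qed.

Local Notation E t := (@block_sel R N m t).
Local Notation Mtt t := (@diag_block R N m t M).

Definition conj_coef (t : 'I_N) : 'M[R]_(m, N * m) := invmx (Mtt t) *m E t.

(* The residual of y(t) given the other y(s) is M_tt^-1 e(t). *)
Lemma is_proj_dual_others t a :
  is_proj P (dual e M) (comps m (~: [set t])) (dual e M (mxvec_index t a))
    (lincomb e (row (mxvec_index t a) (invmx M) - row a (conj_coef t))).
Proof.
have Mtt_unit := diag_block_unitmx t M_pd.
split.
  apply/in_span_dualP.
  exists ((row (mxvec_index t a) (invmx M) - row a (conj_coef t)) *m M).
    move=> i; rewrite comps_setC inE negbK.
    case/mxvec_indexP: i => s b; rewrite mem_comps inE => /eqP ->.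
    have y_coef :
        row (mxvec_index t a) (invmx M) *m M *m (E t)^T = row (mxvec_index t a) (E t)^T.
      by rewrite -!row_mul mulVmx // mul1mx.
    have conj_coef_block : row a (conj_coef t) *m M *m (E t)^T = row a 1%:M.
      by rewrite -!row_mul /conj_coef -!mulmxA (mulmxA (E t)) mulVmx.
    rewrite -mul_block_sel_tr !mulmxBl y_coef conj_coef_block !mxE.
    by rewrite (inj_eq (@mxvec_index_injr N m t)) subrr.
  by rewrite mulmxK.
move=> i i_other; rewrite /dual lincombB opprB addrC subrK.
rewrite (cov_lincomb_dual e_second_order cov_e M_pd) /conj_coef row_mul.
exact: mul_block_sel_off.
Qed.

Lemma normalized_conjugate_dual : normalized_conjugate P (dual e M) e.
Proof.
move=> t py py_proj dt Delta.
have Mtt_unit := diag_block_unitmx t M_pd.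
have Mtt_sym : (Mtt t)^T = Mtt t by apply: diag_block_sym; case: M_pd.
have dtE a : dt a = lincomb e (row a (conj_coef t)).
  have := is_proj_dual_uniq e_second_order cov_e M_pd (py_proj a) (is_proj_dual_others t a).
  by rewrite /dt => ->; rewrite /dual lincombB opprB addrC subrK.
have DeltaE : Delta = invmx (Mtt t).
  apply/matrixP => a b; rewrite /Delta mxE !dtE (cov_lincomb e_second_order cov_e).
  rewrite row_mul_tr_row /conj_coef trmx_mul trmx_inv Mtt_sym.
  have -> : invmx (Mtt t) *m E t *m M *m ((E t)^T *m invmx (Mtt t)) =
            invmx (Mtt t) *m Mtt t *m invmx (Mtt t) by rewrite /diag_block !mulmxA.
  by rewrite mulVmx // mul1mx.
split => [|a]; first by rewrite DeltaE unitmx_inv.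
rewrite DeltaE invmxK -(lincomb_delta e) -row_block_sel -[E t](mulKVmx Mtt_unit).
rewrite -/(conj_coef t) row_mul -(lincomb_mul e).
by apply/funeqP => w; apply: eq_bigr => b _; rewrite mxE dtE.
Qed.

End normalized_conjugate.

Theorem theorem2 (d : measure_display) (T : measurableType d) (R : realType)
  (P : probability T R) (m n N : nat)
  (hm : (1 <= m)%N) (hn : (1 <= n)%N) (hN : (2 * n < N)%N)
  (M : 'M[R]_(N * m)) (e : 'I_(N * m) -> T -> R) :
  sym_posdef M -> banded n M ->
  stationary P e -> covmx P e e = M ->
  exists y : 'I_(N * m) -> T -> R,
    [/\ is_process P y /\ solves M y e,
        (forall y' : 'I_(N * m) -> T -> R,
            is_process P y' -> solves M y' e -> y' = y),
        stationary P y /\ full_rank P y /\ reciprocal P n y,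
        covmx P y e = 1%:M
      & normalized_conjugate P y e].
Proof.
move=> M_pd M_band [e_process _] cov_ee.
have cov_e i j : cov P (e i) (e j) = M i j by rewrite -cov_ee mxE.
have y_process : is_process P (dual e M) by move=> i; exact: dual_second_order.
have covmx_y := covmx_dual e_process cov_e M_pd.
exists (dual e M); split.
- by split=> // i; exact: solves_dual.
- by move=> y' _; exact: solves_uniq.
- split; [|split].
  + split=> //; rewrite covmx_y; split; first by case: (sym_posdef_invmx M_pd).
    apply: block_circulant_invmx; [lia | exact: sym_posdef_unitmx | exact: M_band.1].
  + by rewrite /full_rank covmx_y; exact: sym_posdef_invmx.
  + move=> t1 t2; rewrite comps_setC; apply: cond_orth_dual => // i j.
    exact: banded_interior_exterior.
- exact: covmx_dual_e.
- exact: normalized_conjugate_dual.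
Qed.
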